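(* Let $n\ge 2$ be an integer and let $(x_0,y_0),\dots,(x_n,y_n)\in\mathbb{R}^2$ with $a:=x_0<x_1<\dots<x_n=:b$. For each $k\in\{1,\dots,n\}$ fix $d_k\in[0,1)$ and put \[ a_k=\frac{x_k-x_{k-1}}{x_n-x_0},\quad b_k=\frac{x_nx_{k-1}-x_0x_k}{x_n-x_0},\quad c_k=\frac{y_k-y_{k-1}}{x_n-x_0}-d_k\frac{y_n-y_0}{x_n-x_0},\quad e_k=\frac{x_ny_{k-1}-x_0y_k}{x_n-x_0}-d_k\frac{x_ny_0-x_0y_n}{x_n-x_0}, \] and $f_k(x,y)=(a_kx+b_k,\;c_kx+d_ky+e_k)$. Let $\theta=1$ if $c_1=\dots=c_n=0$ and $\theta=\dfrac{1-\max_k a_k}{2\max_k|c_k|}$ otherwise. Let $f:[a,b]\to\mathbb{R}$ be the affine fractal interpolation function associated with these data. For $k\in\{1,\dots,n\}$ set \[ u_k=\frac{b_k}{1-a_k},\qquad v_k=\frac{b_kc_k}{(1-a_k)(1-d_k)}+\frac{e_k}{1-d_k},\qquad s_k=\max\{a_k+\theta|c_k|,\,d_k\}, \] and $M=\max_{i,j\in\{1,\dots,n\}}\left(|u_i-u_j|+\theta|v_i-v_j|\right)$. Let $\sigma$ be a permutation of $\{1,\dots,n\}$ with $s_{\sigma(1)}\le\dots\le s_{\sigma(n)}$, and let $D=1-s_{\sigma(n-1)}s_{\sigma(n)}$. Define \[ A=\min\left\{\min_{1\le j\le n-1}\left(v_{\sigma(j)}-\frac{Ms_{\sigma(j)}(1+s_{\sigma(n)})}{\theta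 D}\right),\ v_{\sigma(n)}-\frac{Ms_{\sigma(n)}(1+s_{\sigma(n-1)})}{\theta D}\right\}, \] \[ B=\max\left\{\max_{1\le j\le n-1}\left(v_{\sigma(j)}+\frac{Ms_{\sigma(j)}(1+s_{\sigma(n)})}{\theta D}\right),\ v_{\sigma(n)}+\frac{Ms_{\sigma(n)}(1+s_{\sigma(n-1)})}{\theta D}\right\}. \] Then $f([a,b])\subseteq[A,B]$.
   Context: The maps $f_k$ are contractions for the metric $\rho((u_1,v_1),(u_2,v_2))=|u_1-u_2|+\theta|v_1-v_2|$ on $\mathbb{R}^2$, and the attractor of the iterated function system $\{f_1,\dots,f_n\}$ is the unique nonempty compact set $K\subseteq\mathbb{R}^2$ with $K=\bigcup_{k=1}^n f_k(K)$. The affine fractal interpolation function is the continuous function $f:[a,b]\to\mathbb{R}$ with $f(x_k)=y_k$ for all $k\in\{0,\dots,n\}$ whose graph $\{(x,f(x)):x\in[a,b]\}$ equals this attractor. Here $(u_k,v_k)$ is the fixed point of $f_k$ and $s_k$ its Lipschitz constant with respect to $\rho$. *)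

From Stdlib Require Import Reals Lra Lia List ClassicalEpsilon.
Import ListNotations.
Open Scope R_scope.

Definition maxk (m : nat) (g : nat -> R) : R :=
  fold_right Rmax (g 1%nat) (map g (seq 1 m)).
Definition mink (m : nat) (g : nat -> R) : R :=
  fold_right Rmin (g 1%nat) (map g (seq 1 m)).

Section Coeffs.
Variables (n : nat) (x y d : nat -> R).

Definition ak (k : nat) : R := (x k - x (k-1)%nat) / (x n - x 0%nat).
Definition bk (k : nat) : R := (x n * x (k-1)%nat - x 0%nat * x k) / (x n - x 0%nat).
Definition ck (k : nat) : R :=
  (y k - y (k-1)%nat) / (x n - x 0%nat) - d k * ((y n - y 0%nat) / (x n - x 0%nat)).
Definition ek (k : nat) : R :=
  (x n * y (k-1)%nat - x 0%nat * y k) / (x n - x 0%nat)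
  - d k * ((x n * y 0%nat - x 0%nat * y n) / (x n - x 0%nat)).

Definition fk (k : nat) (p : R * R) : R * R :=
  (ak k * fst p + bk k, ck k * fst p + d k * snd p + ek k).

Definition theta : R :=
  if excluded_middle_informative (forall k, (1 <= k <= n)%nat -> ck k = 0)
  then 1
  else (1 - maxk n ak) / (2 * maxk n (fun k => Rabs (ck k))).

Definition uk (k : nat) : R := bk k / (1 - ak k).
Definition vk (k : nat) : R :=
  bk k * ck k / ((1 - ak k) * (1 - d k)) + ek k / (1 - d k).
Definition sk (k : nat) : R := Rmax (ak k + theta * Rabs (ck k)) (d k).

Definition Mbound : R :=
  maxk n (fun i => maxk n (fun j => Rabs (uk i - uk j) + theta * Rabs (vk i - vk j))).

Definition graph (f : R -> R) : R * R -> Prop :=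
  fun p => exists t, x 0%nat <= t <= x n /\ p = (t, f t).

(* f is the affine fractal interpolation function of the data:
   continuous on [a,b], interpolates, and its graph (a nonempty compact set)
   satisfies the self-similarity equation, hence is the attractor. *)
Definition is_AFIF (f : R -> R) : Prop :=
  (forall t, x 0%nat <= t <= x n ->
      limit1_in f (fun z => x 0%nat <= z <= x n) (f t) t) /\
  (forall k, (k <= n)%nat -> f (x k) = y k) /\
  (forall p, graph f p <->
     exists k, (1 <= k <= n)%nat /\ exists q, graph f q /\ p = fk k q).

Variable sigma : nat -> nat.

Definition Dden : R := 1 - sk (sigma (n-1)%nat) * sk (sigma n).

Definition Alow : R :=
  Rmin (mink (n-1) (fun j => vk (sigma j)
          - Mbound * sk (sigma j) * (1 + sk (sigma n)) / (theta * Dden)))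
       (vk (sigma n) - Mbound * sk (sigma n) * (1 + sk (sigma (n-1)%nat)) / (theta * Dden)).
Definition Bup : R :=
  Rmax (maxk (n-1) (fun j => vk (sigma j)
          + Mbound * sk (sigma j) * (1 + sk (sigma n)) / (theta * Dden)))
       (vk (sigma n) + Mbound * sk (sigma n) * (1 + sk (sigma (n-1)%nat)) / (theta * Dden)).
End Coeffs.

(* The graph K of f is the attractor of the maps f_k, which are contractions
   with ratios s_k for the metric rho and fix the points P_k = (u_k, v_k).
   Put m = sup { rho(p, P_k) : p in K, k <> sigma(n) } and
   m' = sup { rho(p, P_sigma(n)) : p in K }.  Writing p = f_j(q) and going
   through P_j gives rho(p, P_k) <= s_j rho(q, P_j) + M, whence
   m' <= M + s_sigma(n-1) m and m <= max(s_sigma(n-1) m, s_sigma(n) m') + M.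
   Solving this system bounds m and m'; one more application of
   rho(f_j(q), P_j) <= s_j rho(q, P_j) then bounds theta |f(t) - v_j|. *)
From Stdlib Require Import Reals Lra Lia List Classical ClassicalEpsilon.
Open Scope R_scope.

Lemma fold_right_Rmax_ge (l : list R) (a z : R) : In z l -> z <= fold_right Rmax a l.
Proof.
  induction l as [|b l IH]; simpl; [tauto|].
  intros [<-|Hz]; [apply Rmax_l|].
  eapply Rle_trans; [apply IH; auto|apply Rmax_r].
Qed.

Lemma fold_right_Rmax_lt (l : list R) (a c : R) :
  (forall z, In z l -> z < c) -> a < c -> fold_right Rmax a l < c.
Proof. induction l as [|b l IH]; simpl; auto. intros Hl Ha. apply Rmax_lub_lt; auto. Qed.

Lemma fold_right_Rmin_le (l : list R) (a z : R) : In z l -> fold_right Rmin a l <= z.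
Proof.
  induction l as [|b l IH]; simpl; [tauto|].
  intros [<-|Hz]; [apply Rmin_l|].
  eapply Rle_trans; [apply Rmin_r|apply IH; auto].
Qed.

Lemma maxk_ge m g k : (1 <= k <= m)%nat -> g k <= maxk m g.
Proof. intros; apply fold_right_Rmax_ge, in_map, in_seq; lia. Qed.

Lemma mink_le m g k : (1 <= k <= m)%nat -> mink m g <= g k.
Proof. intros; apply fold_right_Rmin_le, in_map, in_seq; lia. Qed.

Lemma maxk_lt m g c :
  (1 <= m)%nat -> (forall k, (1 <= k <= m)%nat -> g k < c) -> maxk m g < c.
Proof.
  intros Hm Hg. apply fold_right_Rmax_lt; [|apply Hg; lia].
  intros z Hz. apply in_map_iff in Hz as [k [<- Hk]]. apply in_seq in Hk. apply Hg; lia.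
Qed.

Lemma Rabs_le_between (th v w E : R) :
  0 < th -> th * Rabs (w - v) <= E -> v - E / th <= w <= v + E / th.
Proof.
  intros Hth HE.
  assert (Rabs (w - v) <= E / th).
  { apply (Rmult_le_reg_l th); auto. replace (th * (E / th)) with E by (field; lra). auto. }
  split_Rabs; lra.
Qed.

Lemma injective_on_range_surjective (n : nat) (sigma : nat -> nat) :
  (forall j, (1 <= j <= n)%nat -> (1 <= sigma j <= n)%nat) ->
  (forall i j, (1 <= i <= n)%nat -> (1 <= j <= n)%nat -> sigma i = sigma j -> i = j) ->
  forall k, (1 <= k <= n)%nat -> exists i, (1 <= i <= n)%nat /\ sigma i = k.
Proof.
  intros Hrange Hinj k Hk.
  assert (Hnodup : NoDup (map sigma (seq 1 n))).
  { apply NoDup_map_NoDup_ForallPairs; [|apply seq_NoDup].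
    intros i j Hi Hj. apply in_seq in Hi, Hj. apply Hinj; lia. }
  assert (Hin : In k (map sigma (seq 1 n))).
  { apply (NoDup_length_incl (l' := seq 1 n) Hnodup); [rewrite length_map; lia| |apply in_seq; lia].
    intros z Hz. apply in_map_iff in Hz as [i [<- Hi]]. apply in_seq in Hi.
    apply in_seq. specialize (Hrange i). lia. }
  apply in_map_iff in Hin as [i [Hi Hseq]]. apply in_seq in Hseq.
  exists i; split; [lia|auto].
Qed.

(* Clamping to [a, b] turns continuity within [a, b] into continuity on R,
   to which the extreme value theorem of the standard library applies. *)
Lemma continuous_on_segment_bounded (a b : R) (f : R -> R) : a <= b ->
  (forall t, a <= t <= b -> limit1_in f (fun z => a <= z <= b) (f t) t) ->
  exists C, forall t, a <= t <= b -> Rabs (f t) <= C.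
Proof.
  intros Hab Hf.
  set (clamp := fun z => Rmax a (Rmin b z)).
  assert (Hclamp_in : forall z, a <= clamp z <= b).
  { intro z; unfold clamp, Rmax, Rmin; repeat destruct Rle_dec; lra. }
  assert (Hclamp_lip : forall z w, Rabs (clamp z - clamp w) <= Rabs (z - w)).
  { intros z w; unfold clamp, Rmax, Rmin; repeat destruct Rle_dec; split_Rabs; lra. }
  assert (Hclamp_id : forall z, a <= z <= b -> clamp z = z).
  { intros z Hz; unfold clamp, Rmax, Rmin; repeat destruct Rle_dec; lra. }
  set (g := fun z => f (clamp z)).
  assert (Hg : forall c, a <= c <= b -> continuity_pt g c).
  { intros c _ eps Heps.
    destruct (Hf (clamp c) (Hclamp_in c) eps Heps) as [alp [Halp Hlim]].
    exists alp; split; auto. intros z [_ Hz]. apply Hlim. split; [apply Hclamp_in|].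
    simpl in *. unfold R_dist in *. eapply Rle_lt_trans; [apply Hclamp_lip|exact Hz]. }
  destruct (continuity_ab_maj g a b Hab Hg) as [tmax [Hmax _]].
  destruct (continuity_ab_min g a b Hab Hg) as [tmin [Hmin _]].
  exists (Rabs (g tmax) + Rabs (g tmin)). intros t Ht.
  specialize (Hmax t Ht); specialize (Hmin t Ht).
  unfold g in *; rewrite (Hclamp_id t Ht) in Hmax, Hmin. split_Rabs; lra.
Qed.

Lemma sup_system_bounds (s s' M m m' : R) :
  0 <= s' <= s -> s < 1 -> 0 <= M -> 0 <= m ->
  m' <= M + s' * m -> m <= Rmax (s' * m + M) (s * m' + M) ->
  m <= M * (1 + s) / (1 - s' * s) /\ m' <= M * (1 + s') / (1 - s' * s).
Proof.
  intros Hs' Hs HM Hm Hm' Hmax.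
  assert (HD : 0 < 1 - s' * s) by nra.
  assert (Hmul : m * (1 - s' * s) <= M * (1 + s)).
  { unfold Rmax in Hmax; destruct Rle_dec in Hmax.
    - assert (s * m' <= s * (M + s' * m)) by (apply Rmult_le_compat_l; lra). nra.
    - assert (m * (1 - s') * (1 + s) <= M * (1 + s)) by (apply Rmult_le_compat_r; nra).
      nra. }
  assert (Hm_le : m <= M * (1 + s) / (1 - s' * s)).
  { apply (Rmult_le_reg_r (1 - s' * s)); auto.
    replace (M * (1 + s) / (1 - s' * s) * (1 - s' * s)) with (M * (1 + s)) by (field; lra).
    lra. }
  split; auto.
  replace (M * (1 + s') / (1 - s' * s)) with (M + s' * (M * (1 + s) / (1 - s' * s)))
    by (field; lra).
  assert (s' * m <= s' * (M * (1 + s) / (1 - s' * s))) by (apply Rmult_le_compat_l; lra).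
  lra.
Qed.

Section SelfSimilarSet.

Variables (T : Type) (rho : T -> T -> R) (K : T -> Prop) (I : nat -> Prop)
  (P : nat -> T) (s : nat -> R) (N : nat) (s' M : R).

Hypothesis rho_ge0 : forall p q, 0 <= rho p q.
Hypothesis rho_triangle : forall p q r, rho p r <= rho p q + rho q r.
Hypothesis K_inhabited : exists p, K p.
Hypothesis K_bounded : exists C, forall p, K p -> rho p (P N) <= C.
Hypothesis I_N : I N.
Hypothesis I_other : exists k, I k /\ k <> N.
Hypothesis P_diam : forall i j, I i -> I j -> rho (P i) (P j) <= M.
Hypothesis s_ge0 : forall k, I k -> 0 <= s k.
Hypothesis s_le_s' : forall k, I k -> k <> N -> s k <= s'.
Hypothesis s'_le_sN : s' <= s N.
Hypothesis sN_lt1 : s N < 1.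
Hypothesis K_self_similar : forall p, K p ->
  exists j q, I j /\ K q /\ rho p (P j) <= s j * rho q (P j).

Let dists_other (r : R) : Prop := exists k p, I k /\ k <> N /\ K p /\ r = rho p (P k).
Let dists_N (r : R) : Prop := exists p, K p /\ r = rho p (P N).

Lemma M_ge0 : 0 <= M.
Proof. eapply Rle_trans; [apply (rho_ge0 (P N) (P N))|auto]. Qed.

Lemma dists_bounded : exists C, forall p k, K p -> I k -> rho p (P k) <= C.
Proof.
  destruct K_bounded as [C HC]. exists (C + M). intros p k Hp Hk.
  eapply Rle_trans; [apply (rho_triangle _ (P N))|].
  apply Rplus_le_compat; auto.
Qed.

Lemma dists_other_bound : bound dists_other.
Proof.
  destruct dists_bounded as [C HC]. exists C.
  intros r (k & p & Hk & _ & Hp & ->). auto.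
Qed.

Lemma dists_other_inhabited : exists r, dists_other r.
Proof.
  destruct K_inhabited as [p Hp], I_other as [k [Hk HkN]].
  exists (rho p (P k)), k, p. auto.
Qed.

Lemma dists_N_bound : bound dists_N.
Proof.
  destruct dists_bounded as [C HC]. exists C. intros r (p & Hp & ->). auto.
Qed.

Lemma dists_N_inhabited : exists r, dists_N r.
Proof. destruct K_inhabited as [p Hp]. exists (rho p (P N)), p. auto. Qed.

Let m := proj1_sig (completeness dists_other dists_other_bound dists_other_inhabited).
Let m' := proj1_sig (completeness dists_N dists_N_bound dists_N_inhabited).

Lemma m_lub : is_lub dists_other m.
Proof. exact (proj2_sig (completeness _ _ _)). Qed.

Lemma m'_lub : is_lub dists_N m'.
Proof. exact (proj2_sig (completeness _ _ _)). Qed.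

Lemma dist_other_le_m k p : I k -> k <> N -> K p -> rho p (P k) <= m.
Proof. intros. apply m_lub. exists k, p. auto. Qed.

Lemma dist_N_le_m' p : K p -> rho p (P N) <= m'.
Proof. intros. apply m'_lub. exists p. auto. Qed.

Lemma m_ge0 : 0 <= m.
Proof.
  destruct K_inhabited as [p Hp], I_other as [k [Hk HkN]].
  eapply Rle_trans; [apply (rho_ge0 p (P k))|]. apply dist_other_le_m; auto.
Qed.

Lemma contracted_other_le j q : I j -> j <> N -> K q -> s j * rho q (P j) <= s' * m.
Proof.
  intros Hj HjN Hq.
  apply Rmult_le_compat; auto. apply dist_other_le_m; auto.
Qed.

Lemma contracted_N_le q : K q -> s N * rho q (P N) <= s N * m'.
Proof.
  intros Hq. apply Rmult_le_compat_l; [apply s_ge0; auto|]. apply dist_N_le_m'; auto.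
Qed.

Lemma dist_via_image p k j q : I k -> I j -> rho p (P j) <= s j * rho q (P j) ->
  rho p (P k) <= s j * rho q (P j) + M.
Proof.
  intros Hk Hj Hp.
  eapply Rle_trans; [apply (rho_triangle _ (P j))|]. apply Rplus_le_compat; auto.
Qed.

Lemma s'_ge0 : 0 <= s'.
Proof. destruct I_other as [k [Hk HkN]]. eapply Rle_trans; [apply s_ge0|apply s_le_s']; eauto. Qed.

Lemma m'_le : m' <= M + s' * m.
Proof.
  assert (Hmax : m' <= Rmax (s N * m') (M + s' * m)).
  { apply m'_lub. intros r (p & Hp & ->).
    destruct (K_self_similar p Hp) as (j & q & Hj & Hq & Hpq).
    destruct (Nat.eq_dec j N) as [->|HjN].
    - eapply Rle_trans; [|apply Rmax_l].
      eapply Rle_trans; [apply Hpq|apply contracted_N_le; auto].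
    - eapply Rle_trans; [|apply Rmax_r].
      eapply Rle_trans; [apply (dist_via_image p N j q); auto|].
      pose proof (contracted_other_le j q Hj HjN Hq). lra. }
  pose proof m_ge0. pose proof M_ge0. pose proof s'_ge0.
  unfold Rmax in Hmax; destruct Rle_dec in Hmax; [lra|].
  assert (m' <= 0) by nra. nra.
Qed.

Lemma m_le : m <= Rmax (s' * m + M) (s N * m' + M).
Proof.
  apply m_lub. intros r (k & p & Hk & HkN & Hp & ->).
  destruct (K_self_similar p Hp) as (j & q & Hj & Hq & Hpq).
  eapply Rle_trans; [apply (dist_via_image p k j q); auto|].
  destruct (Nat.eq_dec j N) as [->|HjN].
  - eapply Rle_trans; [|apply Rmax_r]. pose proof (contracted_N_le q Hq). lra.
  - eapply Rle_trans; [|apply Rmax_l]. pose proof (contracted_other_le j q Hj HjN Hq). lra.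
Qed.

Lemma m_m'_bounds :
  m <= M * (1 + s N) / (1 - s' * s N) /\ m' <= M * (1 + s') / (1 - s' * s N).
Proof.
  apply sup_system_bounds; auto using M_ge0, m_ge0, m'_le, m_le.
  split; [apply s'_ge0|auto].
Qed.

Theorem self_similar_dist_other_le p k : K p -> I k -> k <> N ->
  rho p (P k) <= M * (1 + s N) / (1 - s' * s N).
Proof.
  intros Hp Hk HkN. eapply Rle_trans; [apply dist_other_le_m; eauto|apply m_m'_bounds].
Qed.

Theorem self_similar_dist_N_le p : K p ->
  rho p (P N) <= M * (1 + s') / (1 - s' * s N).
Proof.
  intros Hp. eapply Rle_trans; [apply dist_N_le_m'; eauto|apply m_m'_bounds].
Qed.

End SelfSimilarSet.

Definition rho (th : R) (p q : R * R) : R :=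
  Rabs (fst p - fst q) + th * Rabs (snd p - snd q).

Lemma rho_ge0 th p q : 0 <= th -> 0 <= rho th p q.
Proof.
  intros Hth. unfold rho.
  pose proof (Rabs_pos (fst p - fst q)). pose proof (Rabs_pos (snd p - snd q)). nra.
Qed.

Lemma rho_triangle th p q r : 0 <= th -> rho th p r <= rho th p q + rho th q r.
Proof.
  intros Hth. unfold rho.
  pose proof (Rabs_triang (fst p - fst q) (fst q - fst r)) as H1.
  pose proof (Rabs_triang (snd p - snd q) (snd q - snd r)) as H2.
  replace (fst p - fst q + (fst q - fst r)) with (fst p - fst r) in H1 by ring.
  replace (snd p - snd q + (snd q - snd r)) with (snd p - snd r) in H2 by ring.
  nra.
Qed.

Lemma rho_ge_snd th p q : th * Rabs (snd p - snd q) <= rho th p q.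
Proof. unfold rho. pose proof (Rabs_pos (fst p - fst q)). lra. Qed.

Section AffineFIF.

Variables (n : nat) (x y d : nat -> R).

Hypothesis n_ge2 : (2 <= n)%nat.
Hypothesis x_step : forall k, (k < n)%nat -> x k < x (S k).
Hypothesis d_range : forall k, (1 <= k <= n)%nat -> 0 <= d k < 1.

Lemma x_lt i j : (i < j <= n)%nat -> x i < x j.
Proof.
  induction j as [|j IH]; intros Hij; [lia|].
  destruct (Nat.eq_dec i j) as [->|Hne]; [apply x_step; lia|].
  apply Rlt_trans with (x j); [apply IH; lia|apply x_step; lia].
Qed.

Lemma ak_range k : (1 <= k <= n)%nat -> 0 <= ak n x k < 1.
Proof.
  intros Hk. unfold ak.
  assert (x (k - 1)%nat < x k) by (apply x_lt; lia).
  assert (x 0%nat <= x (k - 1)%nat).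
  { destruct (Nat.eq_dec k 1) as [->|]; [simpl; lra|left; apply x_lt; lia]. }
  assert (x k <= x n).
  { destruct (Nat.eq_dec k n) as [->|]; [lra|left; apply x_lt; lia]. }
  assert (Hk1n : x 0%nat < x (k - 1)%nat \/ x k < x n).
  { destruct (Nat.eq_dec k 1) as [->|]; [right; apply x_lt; lia|left; apply x_lt; lia]. }
  split.
  - apply Rmult_le_pos; [lra|left; apply Rinv_0_lt_compat; lra].
  - apply (Rmult_lt_reg_r (x n - x 0%nat)); [lra|].
    unfold Rdiv; rewrite Rmult_assoc, Rinv_l; lra.
Qed.

Lemma maxk_ak_lt1 : maxk n (ak n x) < 1.
Proof. apply maxk_lt; [lia|]. intros k Hk; apply ak_range; auto. Qed.

(* theta is chosen so that theta |c_k| <= (1 - max a_k) / 2. *)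
Lemma ak_theta_ck_lt1 k : (1 <= k <= n)%nat ->
  0 < theta n x y d /\ ak n x k + theta n x y d * Rabs (ck n x y d k) < 1.
Proof.
  intros Hk. pose proof (ak_range k Hk). unfold theta.
  destruct (excluded_middle_informative _) as [Hc0|Hc0].
  - rewrite Hc0, Rabs_R0 by auto. lra.
  - apply not_all_ex_not in Hc0 as [k0 Hk0]. apply imply_to_and in Hk0 as [Hk0 Hck0].
    set (am := maxk n (ak n x)). set (cm := maxk n (fun k => Rabs (ck n x y d k))).
    assert (Ham : am < 1) by apply maxk_ak_lt1.
    assert (ak n x k <= am) by (apply (maxk_ge n (ak n x)); auto).
    assert (Hck : Rabs (ck n x y d k) <= cm)
      by (apply (maxk_ge n (fun k => Rabs (ck n x y d k))); auto).
    assert (Hcm : 0 < cm).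
    { apply Rlt_le_trans with (Rabs (ck n x y d k0)); [apply Rabs_pos_lt; auto|].
      apply (maxk_ge n (fun k => Rabs (ck n x y d k))); auto. }
    assert (Hth : 0 < (1 - am) / (2 * cm)) by (apply Rdiv_lt_0_compat; lra).
    split; auto.
    apply Rmult_le_compat_l with (r := (1 - am) / (2 * cm)) in Hck; [|lra].
    replace ((1 - am) / (2 * cm) * cm) with ((1 - am) / 2) in Hck by (field; lra).
    lra.
Qed.

Lemma theta_pos : 0 < theta n x y d.
Proof. apply (ak_theta_ck_lt1 1); lia. Qed.

Lemma sk_range k : (1 <= k <= n)%nat -> 0 <= sk n x y d k < 1.
Proof.
  intros Hk. destruct (ak_theta_ck_lt1 k Hk). pose proof (d_range k Hk). unfold sk.
  split; [eapply Rle_trans; [|apply Rmax_r]; lra|apply Rmax_lub_lt; lra].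
Qed.

Definition Pk (k : nat) : R * R := (uk n x k, vk n x y d k).

Lemma fk_Pk k : (1 <= k <= n)%nat -> fk n x y d k (Pk k) = Pk k.
Proof.
  intros Hk. destruct (ak_range k Hk). pose proof (d_range k Hk).
  unfold Pk, fk, uk, vk; simpl. f_equal; field; lra.
Qed.

Lemma fk_contraction k p q : (1 <= k <= n)%nat ->
  rho (theta n x y d) (fk n x y d k p) (fk n x y d k q)
  <= sk n x y d k * rho (theta n x y d) p q.
Proof.
  intros Hk. destruct p as [p1 p2], q as [q1 q2]. unfold rho, fk; simpl.
  set (th := theta n x y d). pose proof theta_pos as Hth. fold th in Hth.
  pose proof (sk_range k Hk) as [Hs0 _]. destruct (ak_range k Hk) as [Ha0 _].
  pose proof (d_range k Hk) as [Hd0 _].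
  assert (Hsa : ak n x k + th * Rabs (ck n x y d k) <= sk n x y d k) by apply Rmax_l.
  assert (Hsd : d k <= sk n x y d k) by apply Rmax_r.
  replace (ak n x k * p1 + bk n x k - (ak n x k * q1 + bk n x k))
    with (ak n x k * (p1 - q1)) by ring.
  replace (ck n x y d k * p1 + d k * p2 + ek n x y d k
           - (ck n x y d k * q1 + d k * q2 + ek n x y d k))
    with (ck n x y d k * (p1 - q1) + d k * (p2 - q2)) by ring.
  pose proof (Rabs_triang (ck n x y d k * (p1 - q1)) (d k * (p2 - q2))) as Htri.
  rewrite !Rabs_mult in *. rewrite (Rabs_pos_eq (ak n x k)) by lra.
  rewrite (Rabs_pos_eq (d k)) in Htri by lra.
  pose proof (Rabs_pos (p1 - q1)). pose proof (Rabs_pos (p2 - q2)).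
  pose proof (Rabs_pos (ck n x y d k)).
  apply Rmult_le_compat_r with (r := Rabs (p1 - q1)) in Hsa; auto.
  apply Rmult_le_compat_r with (r := Rabs (p2 - q2)) in Hsd; auto.
  nra.
Qed.

Lemma Pk_dist_le_Mbound i j : (1 <= i <= n)%nat -> (1 <= j <= n)%nat ->
  rho (theta n x y d) (Pk i) (Pk j) <= Mbound n x y d.
Proof.
  intros Hi Hj. unfold Mbound.
  eapply Rle_trans; [|apply (maxk_ge n _ i Hi)]. simpl.
  apply (maxk_ge n (fun j => Rabs (uk n x i - uk n x j)
                           + theta n x y d * Rabs (vk n x y d i - vk n x y d j))); auto.
Qed.

Variable f : R -> R.
Hypothesis f_AFIF : is_AFIF n x y d f.

Lemma graph_bounded c : exists C, forall p, graph n x f p -> rho (theta n x y d) p c <= C.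
Proof.
  destruct f_AFIF as [Hcont _].
  assert (Hxn : x 0%nat <= x n) by (left; apply x_lt; lia).
  destruct (continuous_on_segment_bounded _ _ f Hxn Hcont) as [C HC].
  pose proof theta_pos.
  exists (Rabs (x 0%nat) + Rabs (x n) + Rabs (fst c)
          + theta n x y d * (C + Rabs (snd c))).
  intros p [t [Ht ->]]. unfold rho; simpl. specialize (HC t Ht).
  assert (Rabs (f t - snd c) <= C + Rabs (snd c)) by (split_Rabs; lra).
  assert (Rabs (t - fst c) <= Rabs (x 0%nat) + Rabs (x n) + Rabs (fst c))
    by (split_Rabs; lra).
  nra.
Qed.

Lemma graph_self_similar p : graph n x f p ->
  exists j q, (1 <= j <= n)%nat /\ graph n x f q /\
    rho (theta n x y d) p (Pk j) <= sk n x y d j * rho (theta n x y d) q (Pk j).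
Proof.
  destruct f_AFIF as [_ [_ Hself]].
  intros Hp. apply Hself in Hp as (j & Hj & q & Hq & ->).
  exists j, q. split; [auto|split; [auto|]].
  rewrite <- (fk_Pk j Hj) at 1. apply fk_contraction; auto.
Qed.

Variable sigma : nat -> nat.
Hypothesis sigma_range : forall j, (1 <= j <= n)%nat -> (1 <= sigma j <= n)%nat.
Hypothesis sigma_inj : forall i j, (1 <= i <= n)%nat -> (1 <= j <= n)%nat ->
  sigma i = sigma j -> i = j.
Hypothesis sigma_sorted : forall i j, (1 <= i <= j)%nat -> (j <= n)%nat ->
  sk n x y d (sigma i) <= sk n x y d (sigma j).

Lemma sigma_preimage k : (1 <= k <= n)%nat -> k <> sigma n ->
  exists i, (1 <= i <= n - 1)%nat /\ sigma i = k.
Proof.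
  intros Hk HkN.
  destruct (injective_on_range_surjective n sigma sigma_range sigma_inj k Hk) as [i [Hi <-]].
  exists i. split; auto. assert (i <> n) by (intros ->; auto). lia.
Qed.

Lemma sk_le_second k : (1 <= k <= n)%nat -> k <> sigma n ->
  sk n x y d k <= sk n x y d (sigma (n - 1)%nat).
Proof.
  intros Hk HkN. destruct (sigma_preimage k Hk HkN) as [i [Hi <-]].
  apply sigma_sorted; lia.
Qed.

Lemma graph_dist_Pk_le q k : graph n x f q -> (1 <= k <= n)%nat ->
  let sN := sk n x y d (sigma n) in
  let sN' := sk n x y d (sigma (n - 1)%nat) in
  (k <> sigma n ->
     rho (theta n x y d) q (Pk k) <= Mbound n x y d * (1 + sN) / Dden n x y d sigma) /\
  (k = sigma n ->
     rho (theta n x y d) q (Pk k) <= Mbound n x y d * (1 + sN') / Dden n x y d sigma).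
Proof.
  intros Hq Hk sN sN'.
  pose proof theta_pos as Hth.
  assert (HN : (1 <= sigma n <= n)%nat) by (apply sigma_range; lia).
  assert (Hother : exists k, (1 <= k <= n)%nat /\ k <> sigma n).
  { exists (sigma 1%nat). split; [apply sigma_range; lia|].
    intros H1n. apply sigma_inj in H1n; lia. }
  assert (Hgraph0 : graph n x f (x 0%nat, f (x 0%nat))).
  { exists (x 0%nat). split; auto. split; [lra|left; apply x_lt; lia]. }
  assert (Hrho0 : forall p q, 0 <= rho (theta n x y d) p q)
    by (intros; apply rho_ge0; lra).
  assert (Htri : forall p q r,
    rho (theta n x y d) p r <= rho (theta n x y d) p q + rho (theta n x y d) q r)
    by (intros; apply rho_triangle; lra).
  split; intros Hkn.
  - eapply (self_similar_dist_other_le _ _ _ (fun k => (1 <= k <= n)%nat));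
      eauto using graph_bounded, Pk_dist_le_Mbound, graph_self_similar, sk_le_second.
    + intros j Hj; apply sk_range; auto.
    + apply sigma_sorted; lia.
    + apply sk_range; auto.
  - subst k.
    eapply (self_similar_dist_N_le _ _ _ (fun k => (1 <= k <= n)%nat));
      eauto using graph_bounded, Pk_dist_le_Mbound, graph_self_similar, sk_le_second.
    + intros j Hj; apply sk_range; auto.
    + apply sigma_sorted; lia.
    + apply sk_range; auto.
Qed.

Lemma Alow_Bup_window (w : R) (j : nat) : (1 <= j <= n)%nat ->
  let M := Mbound n x y d in
  let th := theta n x y d in
  let D := Dden n x y d sigma in
  let sN := sk n x y d (sigma n) in
  let sN' := sk n x y d (sigma (n - 1)%nat) in
  (j <> sigma n -> th * Rabs (w - vk n x y d j) <= sk n x y d j * (M * (1 + sN) / D)) ->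
  (j = sigma n -> th * Rabs (w - vk n x y d j) <= sN * (M * (1 + sN') / D)) ->
  Alow n x y d sigma <= w <= Bup n x y d sigma.
Proof.
  intros Hj M th D sN sN' Hother HN.
  pose proof theta_pos as Hth. fold th in Hth.
  assert (HD : 0 < D).
  { pose proof (sk_range (sigma n) (sigma_range n ltac:(lia))) as HsN.
    pose proof (sk_range (sigma (n - 1)%nat) (sigma_range (n - 1) ltac:(lia))) as HsN'.
    fold sN in HsN. fold sN' in HsN'. unfold D, Dden. fold sN sN'. nra. }
  unfold Alow, Bup. fold M th D sN sN'.
  destruct (Nat.eq_dec j (sigma n)) as [Hjn|Hjn].
  - apply Rabs_le_between in HN; auto. rewrite Hjn in HN.
    replace (M * sN * (1 + sN') / (th * D)) with (sN * (M * (1 + sN') / D) / th)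
      by (field; lra).
    split; [eapply Rle_trans; [apply Rmin_r|]|eapply Rle_trans; [|apply Rmax_r]]; lra.
  - destruct (sigma_preimage j Hj Hjn) as [i [Hi Hij]].
    apply Rabs_le_between in Hother; auto.
    assert (Hfrac : M * sk n x y d (sigma i) * (1 + sN) / (th * D)
                    = sk n x y d j * (M * (1 + sN) / D) / th)
      by (rewrite Hij; field; lra).
    split.
    + eapply Rle_trans; [apply Rmin_l|].
      eapply Rle_trans; [apply (mink_le (n - 1)) with (k := i); lia|].
      simpl. rewrite Hfrac, Hij. lra.
    + eapply Rle_trans; [|apply Rmax_l].
      eapply Rle_trans; [|apply (maxk_ge (n - 1)) with (k := i); lia].
      simpl. rewrite Hfrac, Hij. lra.
Qed.

End AffineFIF.

Theorem theorem3p2 (n : nat) (x y d : nat -> R) (sigma : nat -> nat) (f : R -> R) :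
  (2 <= n)%nat ->
  (forall k, (k < n)%nat -> x k < x (S k)) ->
  (forall k, (1 <= k <= n)%nat -> 0 <= d k < 1) ->
  (forall j, (1 <= j <= n)%nat -> (1 <= sigma j <= n)%nat) ->
  (forall i j, (1 <= i <= n)%nat -> (1 <= j <= n)%nat -> sigma i = sigma j -> i = j) ->
  (forall i j, (1 <= i <= j)%nat -> (j <= n)%nat ->
     sk n x y d (sigma i) <= sk n x y d (sigma j)) ->
  is_AFIF n x y d f ->
  forall t, x 0%nat <= t <= x n ->
    Alow n x y d sigma <= f t <= Bup n x y d sigma.
Proof.
  intros Hn Hx Hd Hrange Hinj Hsorted Hf t Ht.
  assert (Hgraph : graph n x f (t, f t)) by (exists t; auto).
  destruct (graph_self_similar n x y d Hn Hx Hd f Hf _ Hgraph)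
    as (j & q & Hj & Hq & Hcontract).
  destruct (graph_dist_Pk_le n x y d Hn Hx Hd f Hf sigma Hrange Hinj Hsorted q j Hq Hj)
    as [Hother HN].
  pose proof (sk_range n x y d Hn Hx Hd j Hj) as [Hs0 _].
  pose proof (rho_ge_snd (theta n x y d) (t, f t) (Pk n x y d j)) as Hvert.
  simpl in Hvert.
  apply (Alow_Bup_window n x y d Hn Hx Hd sigma Hrange Hinj _ j Hj); intros Hjn.
  - eapply Rle_trans; [apply Hvert|]. eapply Rle_trans; [apply Hcontract|].
    apply Rmult_le_compat_l; auto.
  - subst j. eapply Rle_trans; [apply Hvert|]. eapply Rle_trans; [apply Hcontract|].
    apply Rmult_le_compat_l; auto.
Qed.
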